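(* For $\tau=\tau_F$ one has $\widehat\tau_{\mathbf 0}=1$, and $\widehat\tau_{\mathbf n}=0$ for every $\mathbf n\in\mathbb N_0^d\setminus\{\mathbf 0\}$ that lies in none of the blocks $B_{2m_s}$, $s\in\mathbb N$. The same holds for the coefficients $\widehat{\tau^{\boldsymbol\pi}}_{\mathbf n}$ of $\tau^{\boldsymbol\pi}=\tau_{F^{\boldsymbol\pi}}$ for every sequence $\boldsymbol\pi=(\boldsymbol\pi_s)_{s\in\mathbb N}$ of permutations $\boldsymbol\pi_s$ of $\{0,\dots,2^{m_s}-1\}^d$.
   Context: Fix $d\ge2$. $\mathbb G$ is the dyadic group: sequences $g=(g_k)_{k\ge0}$, $g_k\in\{0,1\}$, coordinatewise addition mod 2, product topology; $\mathbb G^d$ its $d$-th power. For $n\in\mathbb N_0$, $n=\sum_kn_k2^k$, $n_k\in\{0,1\}$. Dyadic interval of rank $k$: $\Delta^{(k)}_m=\{g: g_t=m_{k-1-t},\ 0\le t<k\}$; dyadic cube $\Delta^{(k)}_{\mathbf m}=\prod_l\Delta^{(k)}_{m^l}$. Vector order coordinatewise, $\mathbf 0,\mathbf 1$ constant vectors; $B_k=\{\mathbf n\in\mathbb N_0^d: 2^k\mathbf 1\le\mathbf n<2^{k+1}\mathbf 1\}$. Walsh functions $W_n(g)=\prod_k(-1)^{g_kn_k}$, $W_{\mathbf n}(\mathbf g)=\prod_lW_{n^l}(g^l)$; $W^{(k)}_{\mathbf n\mathbf m}$ is the constant value of $W_{\mathbf n}$ on $\Delta^{(k)}_{\mathbf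 m}$ ($\mathbf n,\mathbf m<2^k\mathbf 1$); $R_{k\mathbf 1}:=W_{2^k\mathbf 1}$. Quasimeasure: $\tau$ on dyadic cubes with $\tau(\Delta^{(k)}_{\mathbf m})=\sum_{\boldsymbol\sigma\in\{0,1\}^d}\tau(\Delta^{(k+1)}_{2\mathbf m+\boldsymbol\sigma})$; $\widehat\tau_{\mathbf n}=\sum_{\mathbf m<2^k\mathbf 1}W^{(k)}_{\mathbf n\mathbf m}\tau(\Delta^{(k)}_{\mathbf m})$ for $\mathbf n<2^k\mathbf 1$. For nonempty closed $E$, $\tau_E$ is the unique nonnegative quasimeasure with $\tau_E(\mathbb G^d)=1$, $\tau_E(\Delta)=0$ iff $\Delta\cap E=\emptyset$, splitting the value of a cube meeting $E$ equally among its $2^d$ children that meet $E$. Let $m_1=0$, $m_{s+1}=2(2m_s+1)$. $F_s=\bigcup_{\mathbf m,\mathbf m'<2^{m_s}\mathbf 1}\{\mathbf g\in\Delta^{(2m_s)}_{2^{m_s}\mathbf m+\mathbf m'}: R_{2m_s\mathbf 1}(\mathbf g)=W^{(m_s)}_{\mathbf m\mathbf m'}\}$, $F=\bigcap_sF_s$; $F^{\boldsymbol\pi}_s$ is defined the same way with $W^{(m_s)}_{\boldsymbol\pi_s(\mathbf m)\,\mathbf m'}$ in place of $W^{(m_s)}_{\mathbf m\mathbf m'}$, and $F^{\boldsymbol\pi}=\bigcap_sF^{\boldsymbol\pi}_s$. *)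

From HB Require Import structures.
From mathcomp Require Import all_boot all_order all_algebra all_fingroup.
From mathcomp Require Import boolp.
Set Implicit Arguments. Unset Strict Implicit. Unset Printing Implicit Defensive.
Import GRing.Theory Num.Theory.
Local Open Scope ring_scope.

(* The dyadic group G: sequences g = (g_k)_{k>=0} of bits. A point of G^d is
   a vector of d such sequences, x : 'I_d -> G. *)
Definition G := nat -> bool.

Definition bit (n j : nat) : bool := odd (n %/ 2 ^ j).

(* Walsh function W_n(g) = prod_k (-1)^(g_k n_k); only digits j < n can be
   nonzero (n < 2^n), so the product is over j < n. *)
Definition W (n : nat) (g : G) : rat :=
  (-1) ^+ (\sum_(j < n) (g j && bit n j))%N.

Definition Wd (d : nat) (n : 'I_d -> nat) (x : 'I_d -> G) : rat :=
  \prod_(l < d) W (n l) (x l).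

Definition cube (d k : nat) (m : 'I_d -> nat) (x : 'I_d -> G) : Prop :=
  forall (l : 'I_d) (t : nat), (t < k)%N -> x l t = bit (m l) (k - 1 - t).

Definition cube_pt (d k : nat) (m : 'I_d -> nat) : 'I_d -> G :=
  fun l t => (t < k)%N && bit (m l) (k - 1 - t).

(* W^(k)_{n m}: the (constant) value of W_n on Delta^(k)_m (n, m < 2^k 1). *)
Definition Wk (d k : nat) (n m : 'I_d -> nat) : rat := Wd n (cube_pt k m).

Definition Rk (d k : nat) (x : 'I_d -> G) : rat := Wd (fun _ => 2 ^ k)%N x.

Definition meets (d : nat) (E : ('I_d -> G) -> Prop) (k : nat) (m : 'I_d -> nat) : Prop :=
  exists x, E x /\ cube k m x.

(* tau_E (Delta^(k)_m), given recursively: the whole space (rank 0) gets 1;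
   a cube of rank k+1 that meets E gets the value of its parent
   Delta^(k)_{floor(m/2)} divided by the number of children
   Delta^(k+1)_{2 floor(m/2) + sigma}, sigma in {0,1}^d, of that parent which
   meet E; a cube not meeting E gets 0. *)
Fixpoint tauE (d : nat) (E : ('I_d -> G) -> Prop) (k : nat) : ('I_d -> nat) -> rat :=
  match k with
  | 0 => fun m => if `[< meets E 0 m >] then 1 else 0
  | k'.+1 => fun m =>
      if `[< meets E k'.+1 m >] then
        tauE E k' (fun l => (m l)./2) /
        (#|[pred sigma : {ffun 'I_d -> bool} |
             `[< meets E k'.+1 (fun l => ((m l)./2).*2 + sigma l)%N >] ]|)%:R
      else 0
  end.

(* Fourier-Walsh coefficient computed at level k (for n < 2^k 1):
   sum_{m < 2^k 1} W^(k)_{n m} tau(Delta^(k)_m). *)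
Definition fcoef (d : nat) (tau : nat -> ('I_d -> nat) -> rat) (k : nat)
  (n : 'I_d -> nat) : rat :=
  \sum_(m : {ffun 'I_d -> 'I_(2 ^ k)})
     Wk k n (fun l => nat_of_ord (m l)) * tau k (fun l => nat_of_ord (m l)).

(* m_1 = 0, m_{s+1} = 2 (2 m_s + 1); index s >= 1 (value at 0 is a dummy). *)
Fixpoint ms (s : nat) : nat :=
  match s with
  | 0 | 1 => 0
  | s'.+1 => (2 * (2 * ms s' + 1))%N
  end.

Definition inB (d k : nat) (n : 'I_d -> nat) : Prop :=
  forall l : 'I_d, (2 ^ k <= n l < 2 ^ k.+1)%N.

(* Generic F_s with an index map p_s applied to the first index m:
   F_s = U_{m,m' < 2^{m_s} 1} { x in Delta^(2 m_s)_{2^{m_s} m + m'} :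
                                R_{2 m_s 1}(x) = W^(m_s)_{p_s(m) m'} },
   and the set is the intersection over s >= 1. *)
Definition Fgen (d : nat)
  (p : forall s, {ffun 'I_d -> 'I_(2 ^ ms s)} -> {ffun 'I_d -> 'I_(2 ^ ms s)})
  (x : 'I_d -> G) : Prop :=
  forall s, (1 <= s)%N ->
    exists m m' : {ffun 'I_d -> 'I_(2 ^ ms s)},
      cube (2 * ms s) (fun l => 2 ^ ms s * m l + m' l)%N x /\
      Rk (2 * ms s) x = Wk (ms s) (fun l => nat_of_ord (p s m l))
                                   (fun l => nat_of_ord (m' l)).

Definition Fset (d : nat) : ('I_d -> G) -> Prop := @Fgen d (fun s m => m).

Definition Fpi (d : nat) (pi : forall s, {perm {ffun 'I_d -> 'I_(2 ^ ms s)}}) :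
  ('I_d -> G) -> Prop := @Fgen d (fun s => pi s).

(* At level 2 m_s a point of F^p is constrained only through the product
   R_{2 m_s 1} of its digits there, which must be a sign determined by its
   lower digits.  Flipping one digit negates R, so every finite prefix meeting
   the constraints of the lower levels extends to a point of F^p.  Hence, among
   the children of a rank-k cube meeting F^p, all meet F^p when k is not a
   level, and exactly those of a prescribed parity meet it when k = 2 m_s.
   Since tau splits mass equally among these children, the coefficient of
   n < 2^(k+1) 1 at rank k+1 is the rank-k one when n < 2^k 1, and otherwise a
   combination of sums, over the admissible children sigma, of the character
   sigma |-> (-1)^(sum_l sigma_l n_(l,k)).  Such a sum vanishes as soon as some
   n_l has digit k, unless k = 2 m_s and every n_l has it, i.e. n is in
   B_(2 m_s). *)

From HB Require Import structures.
From mathcomp Require Import all_boot all_order all_algebra all_fingroup.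
From mathcomp Require Import boolp.
From mathcomp Require Import zify.
Set Implicit Arguments. Unset Strict Implicit. Unset Printing Implicit Defensive.
Import GRing.Theory Num.Theory.
Local Open Scope ring_scope.

Lemma bit_double0 (a : nat) (b : bool) : bit (a.*2 + b) 0 = b.
Proof. by rewrite /bit expn0 divn1 oddD odd_double; case: b. Qed.

Lemma bit_doubleS (a : nat) (b : bool) j : bit (a.*2 + b) j.+1 = bit a j.
Proof. by rewrite /bit expnS divnMA divn2 addnC half_bit_double. Qed.

Lemma bit_small n j : (n < 2 ^ j)%N -> bit n j = false.
Proof. by move=> lt_n; rewrite /bit divn_small. Qed.

Lemma bit_top n k : (2 ^ k <= n < 2 ^ k.+1)%N -> bit n k.
Proof.
move=> /andP[le_n lt_n]; rewrite /bit.
have lt2 : (n %/ 2 ^ k < 2)%N by rewrite ltn_divLR ?expn_gt0 // mulnC -expnSr.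
have gt0 : (0 < n %/ 2 ^ k)%N by rewrite divn_gt0 ?expn_gt0.
by have -> : (n %/ 2 ^ k = 1)%N by lia.
Qed.

Lemma bit_exp2 k j : bit (2 ^ k) j = (j == k).
Proof.
rewrite /bit; case: (ltngtP j k) => [lt_jk|lt_kj|->].
- rewrite -(subnK (ltnW lt_jk)) expnD mulnK ?expn_gt0 //.
  by rewrite -(subnSK lt_jk) expnS oddM.
- by rewrite divn_small // ltn_exp2l.
- by rewrite divnn expn_gt0.
Qed.

Lemma bit_inj K a b : (a < 2 ^ K)%N -> (b < 2 ^ K)%N ->
  (forall j, (j < K)%N -> bit a j = bit b j) -> a = b.
Proof.
elim: K a b => [|K IH] a b lt_a lt_b eq_ab.
  by move: lt_a lt_b; rewrite expn0 !ltnS !leqn0 => /eqP-> /eqP->.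
have lt_half c : (c < 2 ^ K.+1)%N -> (c./2 < 2 ^ K)%N.
  by rewrite -divn2 ltn_divLR // -expnSr.
have bits_half c j : bit c j.+1 = bit c./2 j.
  by rewrite -{1}[c]odd_double_half addnC bit_doubleS.
have odd_ab : odd a = odd b by have := eq_ab 0%N isT; rewrite /bit expn0 !divn1.
rewrite -[a]odd_double_half -[b]odd_double_half odd_ab (IH a./2 b./2) ?lt_half //.
by move=> j lt_jK; rewrite -!bits_half eq_ab.
Qed.

Lemma W_exp2 k g : W (2 ^ k) g = (-1) ^+ g k.
Proof.
rewrite /W (bigD1 (Ordinal (ltn_expl k (isT : (1 < 2)%N)))) //= bit_exp2 eqxx andbT.
rewrite big1 ?addn0 // => j /eqP ne_jk; rewrite bit_exp2.
by case: eqP => [eq_jk|]; [case: ne_jk; apply: val_inj | rewrite andbF].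
Qed.

Lemma W_sqr n g : W n g ^+ 2 = 1.
Proof. by rewrite /W exprAC sqrrN !expr1n. Qed.

Lemma Wd_sqr d n (x : 'I_d -> G) : Wd n x ^+ 2 = 1.
Proof. by rewrite /Wd -prodrXl big1 // => l _; apply: W_sqr. Qed.

Lemma W_set n g k (b : bool) : g k = false ->
  W n (fun j => if j == k then b else g j) = W n g * (-1) ^+ (b && bit n k).
Proof.
move=> gk0; have [lt_kn|le_nk] := ltnP k n.
  rewrite /W (bigD1 (Ordinal lt_kn)) //= [in RHS](bigD1 (Ordinal lt_kn)) //= eqxx gk0.
  rewrite exprD mulrC; congr (_ * _); congr (_ ^+ _); apply: eq_bigr => j ne_jk.
  by rewrite ifN //; apply: contra ne_jk => /eqP eq_jk; apply/eqP/val_inj.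
rewrite bit_small; last first.
  by apply: leq_trans (ltn_expl n (isT : (1 < 2)%N)) _; rewrite leq_exp2l.
rewrite andbF mulr1 /W; congr (_ ^+ _); apply: eq_bigr => j _.
by rewrite ifN // neq_ltn (leq_trans (ltn_ord j) le_nk).
Qed.

Definition chi d (v w : 'I_d -> bool) : rat := \prod_(l < d) (-1) ^+ (w l && v l).

Lemma chiD d (v a b : 'I_d -> bool) : chi v (fun l => a l (+) b l) = chi v a * chi v b.
Proof.
rewrite /chi -big_split /=; apply: eq_bigr => l _.
by case: (a l); case: (b l); case: (v l); rewrite /= ?expr0 ?expr1 ?mulr1 ?mul1r ?mulrNN.
Qed.

Lemma chi_finfun d (v f : 'I_d -> bool) : chi v (finfun f) = chi v f.
Proof. by apply: eq_bigr => l _; rewrite ffunE. Qed.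

Lemma chi1 d (v : 'I_d -> bool) i : chi v (pred1 i) = (-1) ^+ v i.
Proof.
rewrite /chi (bigD1 i) //= eqxx big1 ?mulr1 // => l ne_li.
by rewrite /= (negbTE ne_li).
Qed.

Lemma Rk_chi d k (x : 'I_d -> G) : Rk k x = chi xpredT (fun l => x l k).
Proof. by apply: eq_bigr => l _; rewrite W_exp2 andbT. Qed.

Lemma sumr_involution_opp (R : numDomainType) (T : finType) (P : pred T)
    (f : T -> R) (phi : T -> T) :
  involutive phi -> (forall x, P (phi x) = P x) -> (forall x, f (phi x) = - f x) ->
  \sum_(x | P x) f x = 0.
Proof.
move=> phiK P_phi f_phi.
suff /eqP : (\sum_(x | P x) f x) *+ 2 = 0 by rewrite mulrn_eq0 => /eqP.
rewrite mulr2n {1}(reindex_inj (inv_inj phiK)) /=.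
under eq_bigl => x do rewrite P_phi.
by rewrite -big_split big1 // => x _; rewrite /= f_phi addNr.
Qed.

Lemma sumr_chi_eq0 d (P : pred {ffun 'I_d -> bool}) (v w : 'I_d -> bool) :
  chi v w = -1 ->
  (forall sg : {ffun 'I_d -> bool}, P [ffun l => sg l (+) w l] = P sg) ->
  \sum_(sg | P sg) chi v sg = 0.
Proof.
move=> chi_w P_w; apply: sumr_involution_opp P_w _.
  by move=> sg; apply/ffunP => l; rewrite !ffunE addbK.
by move=> sg; rewrite chi_finfun chiD chi_w mulrN1.
Qed.

Definition child d (q : 'I_d -> nat) (sg : 'I_d -> bool) : 'I_d -> nat :=
  fun l => ((q l).*2 + sg l)%N.

Lemma child_half d (q : 'I_d -> nat) sg : (fun l => (child q sg l)./2) = q.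
Proof. by apply: funext => l; rewrite /child addnC half_bit_double. Qed.

Lemma bit_double_rev (a : nat) (b : bool) k t : (t < k)%N ->
  bit (a.*2 + b) (k.+1 - 1 - t) = bit a (k - 1 - t).
Proof. by move=> lt_tk; rewrite -(bit_doubleS a b); congr bit; lia. Qed.

Lemma cube_childP d k q sg (x : 'I_d -> G) :
  cube k.+1 (child q sg) x <-> cube k q x /\ (forall l, x l k = sg l).
Proof.
have top l : bit (child q sg l) (k.+1 - 1 - k) = sg l.
  by rewrite subn1 subnn bit_double0.
split=> [cube_x | [cube_x x_k] l t].
  split=> [l t lt_tk | l]; last by rewrite cube_x // top.
  by rewrite cube_x ?bit_double_rev // ltnW.
rewrite ltnS leq_eqVlt => /orP[/eqP-> | lt_tk]; first by rewrite x_k top.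
by rewrite cube_x ?bit_double_rev.
Qed.

Fixpoint dyadic_index (k : nat) (g : G) : nat :=
  if k is k'.+1 then ((dyadic_index k' g).*2 + g k')%N else 0%N.

Lemma dyadic_index_lt k g : (dyadic_index k g < 2 ^ k)%N.
Proof. by elim: k => [|k IH] //=; rewrite expnS; case: (g k) => /=; lia. Qed.

Lemma cube_dyadic_index d k (x : 'I_d -> G) : cube k (fun l => dyadic_index k (x l)) x.
Proof.
elim: k => [|k IH]; first by [].
exact/(cube_childP k (fun l => dyadic_index k (x l)) (fun l => x l k) x).
Qed.

Lemma cube_prefix d k N (x y : 'I_d -> G) :
  (forall l t, (t < k)%N -> x l t = y l t) -> cube k N x -> cube k N y.
Proof. by move=> eq_xy cube_x l t lt_tk; rewrite -eq_xy // cube_x. Qed.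

Lemma cube_inj d K (N1 N2 : 'I_d -> nat) (x : 'I_d -> G) :
  (forall l, N1 l < 2 ^ K)%N -> (forall l, N2 l < 2 ^ K)%N ->
  cube K N1 x -> cube K N2 x -> N1 =1 N2.
Proof.
move=> lt_N1 lt_N2 cube1 cube2 l; apply: bit_inj (lt_N1 l) (lt_N2 l) _ => j lt_jK.
have lt_K : (K - 1 - j < K)%N by lia.
have -> : j = (K - 1 - (K - 1 - j))%N by lia.
by rewrite -cube1 // -cube2.
Qed.

Lemma cube_pt_child d k q (sg : 'I_d -> bool) l :
  cube_pt k.+1 (child q sg) l = fun j => if j == k then sg l else cube_pt k q l j.
Proof.
apply: funext => j; rewrite /cube_pt; case: (ltngtP j k) => [lt_jk|lt_kj|->].
- by rewrite ltnS ltnW //= /child bit_double_rev.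
- by rewrite ltnNge lt_kj.
- by rewrite leqnn /child subn1 subnn bit_double0.
Qed.

Lemma Wk_child d k (n q : 'I_d -> nat) (sg : 'I_d -> bool) :
  Wk k.+1 n (child q sg) = Wk k n q * chi (fun l => bit (n l) k) sg.
Proof.
rewrite /Wk /Wd /chi -big_split /=; apply: eq_bigr => l _.
by rewrite cube_pt_child W_set // /cube_pt ltnn.
Qed.

Lemma msS s : (1 <= s)%N -> ms s.+1 = (2 * (2 * ms s + 1))%N.
Proof. by case: s. Qed.

Lemma leq_pred_ms s : (1 <= s)%N -> (s.-1 <= ms s)%N.
Proof.
elim: s => [|[|s] IH] // _.
by rewrite msS //; have := IH isT; lia.
Qed.

Lemma ltn_ms a b : (1 <= a)%N -> (a < b)%N -> (ms a < ms b)%N.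
Proof.
move=> ge1_a; elim: b => [|b IH] //; rewrite ltnS leq_eqVlt => /orP[/eqP<- | lt_ab].
  by rewrite msS //; lia.
by have := IH lt_ab; rewrite msS; lia.
Qed.

Lemma ltn_digits B a b : (a < B -> b < B -> B * a + b < B * B)%N.
Proof. by nia. Qed.

Lemma digits_inj B a b a' b' :
  (b < B -> b' < B -> B * a + b = B * a' + b' -> a = a' /\ b = b')%N.
Proof.
move=> lt_b lt_b' eq_ab; have B_gt0 : (0 < B)%N by apply: leq_ltn_trans lt_b.
split; [have := congr1 (divn^~ B) eq_ab | have := congr1 (modn^~ B) eq_ab];
  by rewrite /= !(mulnC B) ?divnMDl ?modnMDl ?divn_small ?modn_small ?addn0.
Qed.

Lemma opp_eq_of_sqr_eq (R : idomainType) (a b : R) :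
  a ^+ 2 = b ^+ 2 -> a != b -> - a = b.
Proof. by move=> /eqP; rewrite eqf_sqr => /orP[-> // | /eqP->]; rewrite opprK. Qed.

Section Constraints.
Variables (d : nat) (l0 : 'I_d).
Variable p : forall s, {ffun 'I_d -> 'I_(2 ^ ms s)} -> {ffun 'I_d -> 'I_(2 ^ ms s)}.
Arguments p : clear implicits.

Definition Fs s (x : 'I_d -> G) : Prop :=
  exists m m' : {ffun 'I_d -> 'I_(2 ^ ms s)},
    cube (2 * ms s) (fun l => 2 ^ ms s * m l + m' l)%N x /\
    Rk (2 * ms s) x = Wk (ms s) (fun l => nat_of_ord (p s m l)) (fun l => nat_of_ord (m' l)).

Lemma Fs_prefix s (x y : 'I_d -> G) :
  (forall l t, (t <= 2 * ms s)%N -> x l t = y l t) -> Fs s x -> Fs s y.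
Proof.
move=> eq_xy [m [m' [cube_x Rk_x]]]; exists m, m'; split.
  by apply: cube_prefix cube_x => l t lt_t; apply/eq_xy/ltnW.
by rewrite -Rk_x !Rk_chi; congr chi; apply: funext => l; rewrite eq_xy.
Qed.

Definition flip (K : nat) (x : 'I_d -> G) : 'I_d -> G :=
  fun l t => if (l == l0) && (t == K) then ~~ x l t else x l t.

Lemma Rk_flip K x : Rk K (flip K x) = - Rk K x.
Proof.
have chi_l0 : chi xpredT (pred1 l0) = -1 by rewrite chi1.
rewrite !Rk_chi -mulrN1 -chi_l0 -chiD; congr chi; apply: funext => l.
by rewrite /flip eqxx andbT /=; case: (l == l0); rewrite ?addbT ?addbF.
Qed.

(* Flipping digit 2 m_s of one coordinate keeps the cube of rank 2 m_s and
   negates R_{2 m_s 1}, while both sides of the constraint are signs. *)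
Lemma Fs_flip s x : ~ Fs s x -> Fs s (flip (2 * ms s) x).
Proof.
move=> not_Fs_x; set N := fun l => dyadic_index (2 * ms s) (x l).
have lt_div l : (N l %/ 2 ^ ms s < 2 ^ ms s)%N.
  by rewrite ltn_divLR ?expn_gt0 // -expnD addnn -mul2n dyadic_index_lt.
have lt_mod l : (N l %% 2 ^ ms s < 2 ^ ms s)%N by rewrite ltn_pmod ?expn_gt0.
pose m := [ffun l => Ordinal (lt_div l)]; pose m' := [ffun l => Ordinal (lt_mod l)].
have cube_x : cube (2 * ms s) (fun l => 2 ^ ms s * m l + m' l)%N x.
  have -> : (fun l => 2 ^ ms s * m l + m' l)%N = N.
    by apply: funext => l; rewrite !ffunE /= mulnC -divn_eq.
  exact: cube_dyadic_index.
exists m, m'; split.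
  by apply: cube_prefix cube_x => l t lt_t; rewrite /flip (ltn_eqF lt_t) andbF.
rewrite Rk_flip; apply: opp_eq_of_sqr_eq; first by rewrite !Wd_sqr.
by apply/eqP => Rk_x; apply: not_Fs_x; exists m, m'.
Qed.

Definition fix_level s (x : 'I_d -> G) : 'I_d -> G :=
  if `[< Fs s x >] then x else flip (2 * ms s) x.

Fixpoint fix_levels (y : 'I_d -> G) (s : nat) : 'I_d -> G :=
  if s is s'.+1 then fix_level s (fix_levels y s') else y.

Lemma Fs_fix_level s x : Fs s (fix_level s x).
Proof. by rewrite /fix_level; case: asboolP => // /Fs_flip. Qed.

Lemma fix_level_id s x l t : t <> (2 * ms s)%N -> fix_level s x l t = x l t.
Proof.
move=> /eqP ne_t; rewrite /fix_level /flip.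
by case: asboolP => // _; rewrite (negbTE ne_t) andbF.
Qed.

Lemma fix_levels_stable y a b l t : (a <= b)%N ->
  (forall s, (a < s <= b)%N -> (t < 2 * ms s)%N) ->
  fix_levels y b l t = fix_levels y a l t.
Proof.
elim: b => [|b IH]; first by rewrite leqn0 => /eqP->.
rewrite leq_eqVlt => /orP[/eqP-> // | lt_ab] gt_t.
rewrite /= fix_level_id; last by have := gt_t b.+1; rewrite lt_ab leqnn; lia.
by apply: IH => // s /andP[lt_as le_sb]; apply: gt_t; rewrite lt_as ltnW.
Qed.

(* The s-th correction only touches digit 2 m_s, which exceeds t once
   s > t + 1: digit t is settled after t + 1 corrections. *)
Definition fix_limit (y : 'I_d -> G) : 'I_d -> G := fun l t => fix_levels y t.+1 l t.

Lemma fix_limit_prefix y s : (1 <= s)%N ->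
  forall l t, (t <= 2 * ms s)%N -> fix_limit y l t = fix_levels y s l t.
Proof.
move=> ge1_s l t le_t; rewrite /fix_limit.
have [le_ts | lt_st] := leqP t.+1 s.
  symmetry; apply: fix_levels_stable => // s' /andP[lt_ts' _].
  by have := leq_pred_ms (ltn_trans (ltn0Sn t) lt_ts'); lia.
apply: fix_levels_stable (ltnW lt_st) _ => s' /andP[lt_ss' _].
by have := ltn_ms ge1_s lt_ss'; lia.
Qed.

Lemma fix_limit_Fgen y : Fgen p (fix_limit y).
Proof.
move=> [|s] // _; apply: (@Fs_prefix _ (fix_levels y s.+1)); last exact: Fs_fix_level.
by move=> l t le_t; rewrite (fix_limit_prefix _ (ltn0Sn s)).
Qed.

Lemma fix_levels_prefix y K :
  (forall s, (1 <= s)%N -> (2 * ms s < K)%N -> Fs s y) ->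
  forall s l t, (t < K)%N -> fix_levels y s l t = y l t.
Proof.
move=> Fs_y; elim=> [|s IH] l t lt_tK //=; rewrite /fix_level.
case: asboolP => [_ | not_Fs]; first exact: IH.
have [lt_K | le_K] := ltnP (2 * ms s.+1) K.
  case: not_Fs; apply: Fs_prefix (Fs_y s.+1 isT lt_K) => l' t' le_t'.
  by rewrite IH //; lia.
by rewrite /flip (_ : (t == 2 * ms s.+1) = false) ?andbF ?IH //; apply/eqP; lia.
Qed.

Lemma Fgen_extend y K :
  (forall s, (1 <= s)%N -> (2 * ms s < K)%N -> Fs s y) ->
  exists2 x, Fgen p x & forall l t, (t < K)%N -> x l t = y l t.
Proof.
move=> Fs_y; exists (fix_limit y); first exact: fix_limit_Fgen.
by move=> l t lt_tK; apply: (fix_levels_prefix Fs_y).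
Qed.

Lemma meets_child_of_parity k q x0 (sg : 'I_d -> bool) :
  Fgen p x0 -> cube k q x0 ->
  (forall s, (1 <= s)%N -> (2 * ms s)%N = k -> chi xpredT sg = Rk k x0) ->
  meets (Fgen p) k.+1 (child q sg).
Proof.
move=> F_x0 cube_x0 parity_sg.
pose y l t := if (t < k)%N then x0 l t else if t == k then sg l else false.
have y_k l : y l k = sg l by rewrite /y ltnn eqxx.
have Fs_y s : (1 <= s)%N -> (2 * ms s < k.+1)%N -> Fs s y.
  move=> ge1_s; rewrite ltnS leq_eqVlt => /orP[/eqP lvl | lt_k].
    have [m [m' [cube_m Rk_m]]] := F_x0 s ge1_s.
    exists m, m'; split; first by apply: cube_prefix cube_m => l t; rewrite /y lvl => ->.
    rewrite -Rk_m lvl -(parity_sg s ge1_s lvl) Rk_chi; congr chi.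
    by apply: funext => l; rewrite y_k.
  by apply: Fs_prefix (F_x0 s ge1_s) => l t le_t; rewrite /y (leq_ltn_trans le_t lt_k).
have [x F_x x_y] := Fgen_extend Fs_y.
exists x; split => //; apply/cube_childP; split; last by move=> l; rewrite x_y // y_k.
by apply: cube_prefix cube_x0 => l t lt_t; rewrite x_y /y ?lt_t // ltnS ltnW.
Qed.

Lemma parity_of_meets_child k q x0 (sg : 'I_d -> bool) s :
  Fgen p x0 -> cube k q x0 -> (1 <= s)%N -> (2 * ms s)%N = k ->
  meets (Fgen p) k.+1 (child q sg) -> chi xpredT sg = Rk k x0.
Proof.
move=> F_x0 cube_x0 ge1_s lvl [x [F_x /cube_childP[cube_x x_k]]].
have -> : chi xpredT sg = Rk k x.
  by rewrite Rk_chi; congr chi; apply: funext => l; rewrite x_k.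
have [m1 [m1' [cube1 Rk1]]] := F_x s ge1_s.
have [m2 [m2' [cube2 Rk2]]] := F_x0 s ge1_s.
have lt_index (m m' : {ffun 'I_d -> 'I_(2 ^ ms s)}) l :
    (2 ^ ms s * m l + m' l < 2 ^ (2 * ms s))%N.
  by rewrite mul2n -addnn expnD ltn_digits.
have x0_x l t : (t < 2 * ms s)%N -> x0 l t = x l t.
  by rewrite lvl => lt_t; rewrite cube_x0 // cube_x.
have eq_index :=
  cube_inj (lt_index m1 m1') (lt_index m2 m2') cube1 (cube_prefix x0_x cube2).
have [eq_m eq_m'] : m1 = m2 /\ m1' = m2'.
  split; apply/ffunP => l; apply: val_inj;
    by have [] := digits_inj (ltn_ord _) (ltn_ord _) (eq_index l).
by rewrite -lvl Rk1 Rk2 eq_m eq_m'.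
Qed.

Lemma Fgen_nonempty : exists x, Fgen p x.
Proof.
have Fs_vacuous s : (1 <= s)%N -> (2 * ms s < 0)%N -> Fs s (fun _ _ => false).
  by rewrite ltn0.
by have [x F_x _] := Fgen_extend Fs_vacuous; exists x.
Qed.

End Constraints.

Local Notation natf m := (fun l => nat_of_ord (m l)).

Lemma double_addb_lt k (a : nat) (b : bool) : (a < 2 ^ k)%N -> (a.*2 + b < 2 ^ k.+1)%N.
Proof. by rewrite expnS; case: b => /=; lia. Qed.

Lemma half_lt k (a : nat) : (a < 2 ^ k.+1)%N -> (a./2 < 2 ^ k)%N.
Proof. by rewrite expnS -divn2 ltn_divLR // mulnC. Qed.

Definition childm d k (m : {ffun 'I_d -> 'I_(2 ^ k)}) (sg : {ffun 'I_d -> bool}) :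
  {ffun 'I_d -> 'I_(2 ^ k.+1)} :=
  [ffun l => Ordinal (double_addb_lt (sg l) (ltn_ord (m l)))].

Lemma childm_bij d k :
  bijective (fun u : {ffun 'I_d -> 'I_(2 ^ k)} * {ffun 'I_d -> bool} => childm u.1 u.2).
Proof.
exists (fun m : {ffun 'I_d -> 'I_(2 ^ k.+1)} =>
  ([ffun l => Ordinal (half_lt (ltn_ord (m l)))], [ffun l => odd (m l)])).
  move=> [m sg] /=; congr pair; apply/ffunP => l; rewrite !ffunE.
    by apply: val_inj; rewrite /= addnC half_bit_double.
  by rewrite /= oddD odd_double; case: (sg l).
move=> m; apply/ffunP => l; rewrite !ffunE; apply: val_inj.
by rewrite /= addnC odd_double_half.
Qed.

Section FourierRecursion.
Variables (d : nat) (E : ('I_d -> G) -> Prop).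

Definition nchildren k (q : 'I_d -> nat) : nat :=
  #|[pred sg : {ffun 'I_d -> bool} | `[< meets E k.+1 (child q sg) >] ]|.

Lemma tauE_child k q (sg : 'I_d -> bool) :
  tauE E k.+1 (child q sg) =
  if `[< meets E k.+1 (child q sg) >] then tauE E k q / (nchildren k q)%:R else 0.
Proof.
have tauE_S m : tauE E k.+1 m = if `[< meets E k.+1 m >] then
    tauE E k (fun l => (m l)./2) / (nchildren k (fun l => (m l)./2))%:R else 0 by [].
by rewrite tauE_S child_half.
Qed.

Lemma tauE_eq0 k m : ~ meets E k m -> tauE E k m = 0.
Proof. by case: k => [|k] /=; case: asboolP. Qed.

Lemma nchildren_gt0 k q : meets E k q -> (0 < nchildren k q)%N.
Proof.
move=> [x [E_x cube_x]]; apply/card_gt0P; exists [ffun l => x l k].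
rewrite inE; apply/asboolP; exists x; split => //.
by apply/cube_childP; split => // l; rewrite ffunE.
Qed.

Lemma fcoefS k n :
  fcoef (tauE E) k.+1 n =
  \sum_(m : {ffun 'I_d -> 'I_(2 ^ k)})
     Wk k n (natf m) * (tauE E k (natf m) / (nchildren k (natf m))%:R) *
     \sum_(sg : {ffun 'I_d -> bool} | `[< meets E k.+1 (child (natf m) sg) >])
        chi (fun l => bit (n l) k) sg.
Proof.
rewrite /fcoef (reindex _ (onW_bij _ (childm_bij d k))).
rewrite -(pair_bigA _ (fun m sg =>
  Wk k.+1 n (natf (childm m sg)) * tauE E k.+1 (natf (childm m sg)))).
apply: eq_bigr => m _; rewrite mulr_sumr [in RHS]big_mkcond; apply: eq_bigr => sg _.
have -> : natf (childm m sg) = child (natf m) sg by apply: funext => l; rewrite ffunE.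
rewrite Wk_child tauE_child; case: asboolP => _; last by rewrite !mulr0.
by rewrite mulrAC -mulrA [_ * chi _ _]mulrC mulrA.
Qed.

Lemma fcoefS_small k n : (forall l, n l < 2 ^ k)%N ->
  fcoef (tauE E) k.+1 n = fcoef (tauE E) k n.
Proof.
move=> lt_n; rewrite fcoefS; apply: eq_bigr => m _.
have chi_trivial sg : chi (fun l => bit (n l) k) sg = 1.
  by rewrite /chi big1 // => l _; rewrite bit_small // andbF.
under eq_bigr do rewrite chi_trivial.
rewrite sumr_const -[X in _ *+ X]/(nchildren k (natf m)) -mulr_natr.
have [n0 | gt0] := posnP (nchildren k (natf m)).
  by rewrite tauE_eq0 ?mul0r ?mulr0 ?mul0r // => /nchildren_gt0; rewrite n0.
by rewrite mul1r -mulrA divfK // pnatr_eq0 -lt0n.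
Qed.

Lemma fcoefS_eq0 k n :
  (forall m : {ffun 'I_d -> 'I_(2 ^ k)}, meets E k (natf m) ->
     \sum_(sg : {ffun 'I_d -> bool} | `[< meets E k.+1 (child (natf m) sg) >])
        chi (fun l => bit (n l) k) sg = 0) ->
  fcoef (tauE E) k.+1 n = 0.
Proof.
move=> sum_eq0; rewrite fcoefS big1 // => m _.
case: (asboolP (meets E k (natf m))) => [meets_m | not_meets].
  by rewrite sum_eq0 // mulr0.
by rewrite tauE_eq0 // mul0r mulr0 mul0r.
Qed.

End FourierRecursion.

Section FgenCoefficients.
Variables (d : nat) (l0 : 'I_d).
Variable p : forall s, {ffun 'I_d -> 'I_(2 ^ ms s)} -> {ffun 'I_d -> 'I_(2 ^ ms s)}.

Lemma fcoef_Fgen_0 k : fcoef (tauE (Fgen p)) k (fun _ => 0%N) = 1.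
Proof.
elim: k => [|k IH]; last by rewrite fcoefS_small // => l; rewrite expn_gt0.
have [x0 F_x0] := Fgen_nonempty l0 p.
rewrite /fcoef (eq_bigr (fun _ => 1)) ?sumr_const ?card_ffun ?card_ord ?exp1n // => m _.
rewrite /Wk /Wd big1 ?mul1r => [|l _]; last by rewrite /W big_ord0.
by rewrite /=; case: asboolP => // -[]; exists x0.
Qed.

Lemma sum_children_chi_eq0 k q x0 n i :
  Fgen p x0 -> cube k q x0 -> bit (n i) k ->
  (forall s, (1 <= s)%N -> (2 * ms s)%N = k -> exists i', ~~ bit (n i') k) ->
  \sum_(sg : {ffun 'I_d -> bool} | `[< meets (Fgen p) k.+1 (child q sg) >])
     chi (fun l => bit (n l) k) sg = 0.
Proof.
move=> F_x0 cube_x0 n_i lvl_n.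
have [[s [ge1_s lvl]] | no_lvl] := pselect (exists s, (1 <= s)%N /\ (2 * ms s)%N = k).
  have [i' n_i'] := lvl_n s ge1_s lvl.
  rewrite (eq_bigl (fun sg : {ffun 'I_d -> bool} => chi xpredT sg == Rk k x0)); last first.
    move=> sg; apply/asboolP/eqP => [|parity_sg].
      exact: parity_of_meets_child F_x0 cube_x0 ge1_s lvl.
    by apply: (meets_child_of_parity l0 F_x0 cube_x0) => *.
  (* Toggling sigma_i and sigma_i' keeps the parity and flips the character. *)
  apply: (@sumr_chi_eq0 _ _ _ (fun l => pred1 i l (+) pred1 i' l)).
    by rewrite chiD !chi1 n_i (negbTE n_i') expr1 expr0 mulr1.
  by move=> sg; rewrite chi_finfun !chiD !chi1 mulrNN mulr1.
rewrite (eq_bigl xpredT) => [|sg].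
  by apply: (@sumr_chi_eq0 _ _ _ (pred1 i)); rewrite ?chi1 ?n_i.
apply/asboolP; apply: (meets_child_of_parity l0 F_x0 cube_x0) => s ge1_s lvl.
by case: no_lvl; exists s.
Qed.

Lemma fcoef_Fgen_eq0 n : (exists l, n l <> 0%N) ->
  (forall s, (1 <= s)%N -> ~ inB (2 * ms s) n) ->
  forall k, (forall l, n l < 2 ^ k)%N -> fcoef (tauE (Fgen p)) k n = 0.
Proof.
move=> [l1 n_l1] not_inB; elim=> [|k IH] lt_n.
  by case: n_l1; have := lt_n l1; rewrite expn0 ltnS leqn0 => /eqP.
have [small | /forallPn[i]] := boolP [forall l, n l < 2 ^ k]%N.
  by rewrite fcoefS_small ?IH // => l; apply: (forallP small).
rewrite -leqNgt => ge_i; have n_i : bit (n i) k by rewrite bit_top // ge_i lt_n.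
apply: fcoefS_eq0 => m [x0 [F_x0 cube_x0]].
apply: (sum_children_chi_eq0 F_x0 cube_x0 n_i) => s ge1_s lvl.
have [/forallP all_top | /forallPn[i' n_i']] := boolP [forall l, bit (n l) k]; last first.
  by exists i'.
case: (not_inB s ge1_s) => l; rewrite lvl lt_n andbT leqNgt.
by apply/negP => /bit_small; rewrite all_top.
Qed.

End FgenCoefficients.

Theorem lemma3 (d : nat) (hd : (2 <= d)%N) :
  ((forall k : nat, fcoef (tauE (@Fset d)) k (fun _ => 0%N) = 1%R) /\
   (forall n : 'I_d -> nat,
      (exists l, n l <> 0%N) ->
      (forall s : nat, (1 <= s)%N -> ~ inB (2 * ms s) n) ->
      forall k : nat, (forall l, n l < 2 ^ k)%N ->
        fcoef (tauE (@Fset d)) k n = 0%R))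
  /\
  (forall pi : (forall s : nat, {perm {ffun 'I_d -> 'I_(2 ^ ms s)}}),
     (forall k : nat, fcoef (tauE (Fpi pi)) k (fun _ => 0%N) = 1%R) /\
     (forall n : 'I_d -> nat,
        (exists l, n l <> 0%N) ->
        (forall s : nat, (1 <= s)%N -> ~ inB (2 * ms s) n) ->
        forall k : nat, (forall l, n l < 2 ^ k)%N ->
          fcoef (tauE (Fpi pi)) k n = 0%R)).
Proof.
have l0 : 'I_d by exists 0%N; apply: leq_trans hd.
have coefs p := conj (fcoef_Fgen_0 l0 p) (@fcoef_Fgen_eq0 d l0 p).
by split; [apply: coefs | move=> pi; apply: coefs].
Qed.
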